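(* Let $G$ be a graph of order $n$ with no isolated vertex. Then $G$ is $3$-$\gamma_{\rm tg}$-critical if and only if all of the following hold: (a) $G$ is open twin-free; (b) $G$ has no dominating vertex; (c) for every vertex $v$ of $G$ of degree at most $n-3$, there exists a vertex $u$ of degree $n-2$ that is not adjacent to $v$.
   Context: Open twin-free: no two distinct vertices have the same open neighborhood. A dominating vertex is adjacent to all other vertices. Total domination game: Dominator and Staller alternately choose vertices, each chosen vertex must be adjacent to some vertex not yet totally dominated; the game ends when no legal move exists; Dominator minimizes, Staller maximizes the number of moves; $\gamma_{\rm tg}(G)$ is the number of moves in the Dominator-start game under optimal play. $G|v$ is $G$ with $v$ declared already totally dominated, with $\gamma_{\rm tg}(G|v)$ defined analogously. $G$ is $3$-$\gamma_{\rm tg}$-critical if $\gamma_{\rm tg}(G)=3$ and $\gamma_{\rm tg}(G|v)<3$ for every vertex $v$. *)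

From mathcomp Require Import all_boot.
Set Implicit Arguments. Unset Strict Implicit. Unset Printing Implicit Defensive.

(* A finite simple graph: vertex type T : finType, adjacency e : rel T,
   symmetric and irreflexive (hypotheses of the theorem). *)

Section TDGame.
Variables (T : finType) (e : rel T).

Definition N (v : T) : {set T} := [set u | e v u].
Definition deg (v : T) : nat := #|N v|.

Definition no_isolated : Prop := forall v, exists u, e v u.
Definition open_twin_free : Prop := forall u v, N u = N v -> u = v.
Definition dominating (v : T) : Prop := forall u, u != v -> e v u.

(* D = set of vertices already totally dominated.  A vertex v is a legal
   move iff it is adjacent to some vertex not yet totally dominated. *)
Definition legal (D : {set T}) (v : T) : bool := ~~ (N v \subset D).

(* Number of remaining moves under optimal play, from state D, with
   [dom] = true iff Dominator is to move.  Each legal move strictly enlarges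
   D, so fuel #|T| suffices for the game to end. *)
Fixpoint tgval (fuel : nat) (dom : bool) (D : {set T}) : nat :=
  match fuel with
  | 0 => 0
  | k.+1 =>
    if [exists v, legal D v] then
      (if dom then
         \big[minn/#|T|]_(v | legal D v) tgval k false (D :|: N v)
       else
         \max_(v | legal D v) tgval k true (D :|: N v)).+1
    else 0
  end.

Definition gamma_tg : nat := tgval #|T| true set0.
(* gamma_tg(G|v): Dominator-start game with v declared totally dominated *)
Definition gamma_tg_at (v : T) : nat := tgval #|T| true [set v].

Definition tg_critical3 : Prop :=
  gamma_tg = 3 /\ forall v, gamma_tg_at v < 3.

End TDGame.

(* Every legal move totally dominates a new vertex, so at most #|~: D| moves
   remain from a state D.  Dominator ends the game within two moves iff he has
   a move after which every reply of Staller completes the total domination.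
   In an open twin-free graph this forces at most one undominated vertex:
   any neighbour x of an undominated vertex a is a legal move, so x is adjacent
   to every undominated vertex, and two undominated vertices would be twins.
   Hence gamma_tg(G) <= 2 iff G has a dominating vertex, and, for deg x <= n-3,
   gamma_tg(G|x) <= 2 iff some vertex of degree n-2 misses x; a vertex of
   degree n-2 leaves two undominated vertices, so gamma_tg(G) <= 3.
   Predominating one of two distinct open twins u, v does not help Dominator:
   a union of neighbourhoods contains u iff it contains v, so v stays
   undominated whenever u would. *)

From HB Require Import structures.
From mathcomp Require Import all_boot.
From mathcomp Require Import zify.
Set Implicit Arguments. Unset Strict Implicit. Unset Printing Implicit Defensive.

(* [minn] has no neutral element on nat, but [big_rem_AC] only needs an
   associative and commutative law. *)
HB.instance Definition _ := SemiGroup.isComLaw.Build nat minn minnA minnC.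

Section TotalDominationGame.
Variables (T : finType) (e : rel T).
Hypotheses (e_sym : symmetric e) (e_irr : irreflexive e) (noiso : no_isolated e).
Implicit Types (D S : {set T}) (u v w x z : T).

Lemma in_N v u : (u \in N e v) = e v u.
Proof. by rewrite inE. Qed.

Lemma legalP D v : reflect (exists2 u, e v u & u \notin D) (legal e D v).
Proof.
by apply: (iffP subsetPn) => -[u]; rewrite ?in_N => vu uD; exists u; rewrite ?in_N.
Qed.

Lemma legal_set0 v : legal e set0 v.
Proof. by have [u vu] := noiso v; apply/legalP; exists u; rewrite ?inE. Qed.

Lemma legal_exists D : D != setT -> exists v, legal e D v.
Proof.
rewrite -subTset => /subsetPn [x _ xD]; have [v xv] := noiso x.
by exists v; apply/legalP; exists x; rewrite // e_sym.
Qed.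

Lemma card_gt1 v : 1 < #|T|.
Proof.
have [u vu] := noiso v; have uv : u != v by apply: contraTneq vu => ->; rewrite e_irr.
by apply: leq_trans (max_card (mem [set u; v])); rewrite cards2 uv.
Qed.

Lemma tgval_setT k b : tgval e k b setT = 0.
Proof.
case: k => //= k; case: ifPn => // /existsP [v].
by rewrite /legal subsetT.
Qed.

Lemma tgval_dom_le k D v : legal e D v ->
  tgval e k.+1 true D <= (tgval e k false (D :|: N e v)).+1.
Proof.
move=> vD /=; rewrite ifT; last by apply/existsP; exists v.
by rewrite ltnS (big_rem_AC minn _ _ _ (mem_index_enum v)) vD geq_minl.
Qed.

(* [#|T|] is the neutral value of the minimum in [tgval]. *)
Lemma tgval_dom_ge k D c : D != setT -> c <= #|T| ->
  (forall v, legal e D v -> c <= tgval e k false (D :|: N e v)) ->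
  c < tgval e k.+1 true D.
Proof.
move=> /legal_exists [v vD] cT cF /=; rewrite ifT; last by apply/existsP; exists v.
by rewrite ltnS; elim/big_ind: _ => // m1 m2; rewrite leq_min => -> ->.
Qed.

Lemma tgval_staller_le k D c :
  (forall w, legal e D w -> tgval e k true (D :|: N e w) <= c) ->
  tgval e k.+1 false D <= c.+1.
Proof. by move=> cF /=; case: ifP => // _; rewrite ltnS; apply/bigmax_leqP. Qed.

Lemma tgval_staller_ge k D w : legal e D w ->
  tgval e k true (D :|: N e w) < tgval e k.+1 false D.
Proof.
move=> wD /=; rewrite ifT; last by apply/existsP; exists w.
by rewrite ltnS (leq_bigmax_cond _ wD).
Qed.

Lemma tgval_gt0 k b D : D != setT -> 0 < tgval e k.+1 b D.
Proof. by move=> /legal_exists [v vD] /=; rewrite ifT //; apply/existsP; exists v. Qed.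

Lemma card_undominated_legal D w : legal e D w -> #|~: (D :|: N e w)| < #|~: D|.
Proof.
case/legalP=> u wu uD; apply: proper_card; apply/properP; split.
  by rewrite setCS subsetUl.
by exists u; rewrite !inE // wu orbT.
Qed.

Lemma tgval_le_undominated k b D : tgval e k b D <= #|~: D|.
Proof.
elim: k b D => [|k IH] b D //; have [->|DT] := eqVneq D setT; first by rewrite tgval_setT.
have [v vD] := legal_exists DT; case: b.
  exact: leq_trans (tgval_dom_le k vD) (leq_ltn_trans (IH _ _) (card_undominated_legal vD)).
have D_pos : 0 < #|~: D| := leq_ltn_trans (leq0n _) (card_undominated_legal vD).
rewrite -(prednK D_pos); apply: tgval_staller_le => w wD.
by rewrite -ltnS prednK // (leq_ltn_trans (IH _ _) (card_undominated_legal wD)).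
Qed.

Definition all_moves_finish D : bool :=
  [forall w, legal e D w ==> (D :|: N e w == setT)].

Lemma tgval_staller_le1 k D : (tgval e k.+2 false D <= 1) = all_moves_finish D.
Proof.
apply/idP/forall_inP => [le1 w wD | fin].
  apply: contraTT le1 => unfinished; rewrite -ltnNge.
  exact: leq_ltn_trans (tgval_gt0 k true unfinished) (tgval_staller_ge k.+1 wD).
by apply: tgval_staller_le => w wD; rewrite (eqP (fin w wD)) tgval_setT.
Qed.

Lemma tgval_dom_le2 k D : D != setT ->
  (tgval e k.+3 true D <= 2) = [exists v, legal e D v && all_moves_finish (D :|: N e v)].
Proof.
move=> DT; apply/idP/idP => [le2 | /exists_inP [v vD fin]].
  apply: contraTT le2 => /exists_inPn unfinished; rewrite -ltnNge.
  have [v _] := legal_exists DT.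
  apply: tgval_dom_ge (card_gt1 v) _ => // w wD.
  by rewrite ltnNge tgval_staller_le1 unfinished.
by apply: leq_trans (tgval_dom_le k.+2 vD) _; rewrite ltnS tgval_staller_le1.
Qed.

Lemma gamma_tg_le2 : 2 < #|T| ->
  (gamma_tg e <= 2) = [exists v, all_moves_finish (N e v)].
Proof.
move=> n3; have set0T : set0 != [set: T].
  by rewrite eq_sym -cards_eq0 cardsT -lt0n (ltnW (ltnW n3)).
rewrite /gamma_tg -(subnK n3) addn3 tgval_dom_le2 //.
by apply: eq_existsb => v; rewrite legal_set0 set0U.
Qed.

Lemma gamma_tg_at_le2 x : 2 < #|T| ->
  (gamma_tg_at e x <= 2) = [exists v, legal e [set x] v && all_moves_finish (x |: N e v)].
Proof.
move=> n3; have xT : [set x] != [set: T].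
  by apply: contraTneq n3 => xT; rewrite -cardsT -xT cards1.
by rewrite /gamma_tg_at -(subnK n3) addn3 tgval_dom_le2.
Qed.

Lemma twin_free_all_moves_finish D :
  open_twin_free e -> all_moves_finish D -> #|~: D| <= 1.
Proof.
move=> tf /forall_inP fin; apply/card_le1_eqP => a b; rewrite !inE => aD bD.
apply: tf; apply/setP => x; rewrite !in_N.
have adj_transfer c d : c \notin D -> d \notin D -> e c x -> e d x.
  move=> cD dD cx; have xD : legal e D x by apply/legalP; exists c; rewrite // e_sym.
  by move/eqP/setP/(_ d): (fin x xD); rewrite !inE (negbTE dD) e_sym.
by apply/idP/idP; apply: adj_transfer.
Qed.

Lemma all_moves_finish_twin u v S : u != v -> N e u = N e v ->
  (u \in S) = (v \in S) -> all_moves_finish (u |: S) -> all_moves_finish S.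
Proof.
move=> uv twin uvS /forall_inP fin; apply/forall_inP => w /legalP [a wa aS].
have adj : e w u = e w v by rewrite ![e w _]e_sym -!in_N twin.
have wuS : legal e (u |: S) w.
  apply/legalP; have [au | au] := eqVneq a u; last by exists a; rewrite // !inE negb_or au.
  by subst a; exists v; rewrite -?adj // !inE negb_or eq_sym uv -uvS.
have cover b : b \in u |: (S :|: N e w) by rewrite setUA (eqP (fin w wuS)) inE.
apply/eqP/setP => b; rewrite !inE; have [-> | bu] := eqVneq b u.
  by move: (cover v); rewrite !inE eq_sym (negbTE uv) -uvS -adj.
by move: (cover b); rewrite !inE (negbTE bu).
Qed.

Lemma N_subset_setC1 v : N e v \subset [set~ v].
Proof. by apply/subsetP => u; rewrite !inE; apply: contraTneq => ->; rewrite e_irr. Qed.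

Lemma deg_le v : deg e v <= #|T|.-1.
Proof. by rewrite -(cardsC1 v) subset_leq_card ?N_subset_setC1. Qed.

Lemma dominating_deg v : dominating e v <-> deg e v = #|T|.-1.
Proof.
rewrite /deg -(cardsC1 v); split => [dom | Ncard u uv].
  apply: eq_card => u; rewrite !inE.
  by apply/idP/idP => [|/dom //]; apply: contraTneq => ->; rewrite e_irr.
rewrite -in_N; have /eqP -> : N e v == [set~ v] by rewrite eqEcard N_subset_setC1 Ncard /=.
by rewrite !inE.
Qed.

Lemma card_nonneighbours v : #|~: N e v| = #|T| - deg e v.
Proof. by rewrite cardsCs setCK. Qed.

Lemma card_undominated_add x v : ~~ e v x -> #|~: (x |: N e v)| = #|T| - (deg e v).+1.
Proof. by move=> vx; rewrite cardsCs setCK cardsU1 in_N vx add1n. Qed.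

Lemma dominating_card v : dominating e v <-> #|~: N e v| <= 1.
Proof.
rewrite dominating_deg card_nonneighbours.
have := deg_le v; have := card_gt1 v; split; lia.
Qed.

Lemma legal_nonadjacent x v : ~~ e v x -> legal e [set x] v.
Proof.
move=> vx; have [u vu] := noiso v; apply/legalP; exists u; rewrite // inE.
by apply: contraNneq vx => <-.
Qed.

Lemma gamma_tg_le_move v : gamma_tg e <= #|~: N e v|.+1.
Proof.
rewrite /gamma_tg -(prednK (ltnW (card_gt1 v))).
apply: leq_trans (tgval_dom_le _ (legal_set0 v)) _.
by rewrite set0U ltnS tgval_le_undominated.
Qed.

Lemma gamma_tg_at_le_move x v : legal e [set x] v ->
  gamma_tg_at e x <= #|~: (x |: N e v)|.+1.
Proof.
move=> vx; rewrite /gamma_tg_at -(prednK (ltnW (card_gt1 v))).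
by apply: leq_trans (tgval_dom_le _ vx) _; rewrite ltnS tgval_le_undominated.
Qed.

Lemma deg_lt_no_dominating v : ~ (exists u, dominating e u) -> deg e v < #|T|.-1.
Proof.
move=> nodom; rewrite ltn_neqAle deg_le andbT.
by apply/eqP => /dominating_deg dom; apply: nodom; exists v.
Qed.

Lemma critical_card_gt2 : tg_critical3 e -> 2 < #|T|.
Proof.
case=> g3 _; have := tgval_le_undominated #|T| true set0.
by rewrite -/(gamma_tg e) g3 setC0 cardsT.
Qed.

Lemma critical_no_dominating : tg_critical3 e -> ~ exists v, dominating e v.
Proof.
case=> g3 _ [v /dominating_card Nv]; have := gamma_tg_le_move v.
by rewrite g3 ltnS leqNgt ltnS Nv.
Qed.

Lemma critical_twin_free : tg_critical3 e -> open_twin_free e.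
Proof.
move=> crit u v twin; apply/eqP/contraT => uv; have n3 := critical_card_gt2 crit.
case: crit => g3 /(_ u); rewrite ltnS gamma_tg_at_le2 // => /exists_inP [z _ fin].
have: gamma_tg e <= 2.
  rewrite gamma_tg_le2 //; apply/existsP; exists z; apply: (all_moves_finish_twin uv twin) fin.
  by rewrite !in_N ![e z _]e_sym -!in_N twin.
by rewrite g3.
Qed.

Lemma critical_low_degree : tg_critical3 e ->
  forall x, deg e x <= #|T| - 3 -> exists u, deg e u = #|T| - 2 /\ ~~ e u x.
Proof.
move=> crit x dx; have n3 := critical_card_gt2 crit; have tf := critical_twin_free crit.
have nodom := critical_no_dominating crit; case: crit => _ /(_ x).
rewrite ltnS gamma_tg_at_le2 // => /exists_inP [z _ /(twin_free_all_moves_finish tf) le1].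
have [zx | zx] := boolP (e z x).
  case: nodom; exists z; apply/dominating_card.
  by move: le1; rewrite (setUidPr _) // sub1set in_N.
exists z; split => //; move: le1; rewrite card_undominated_add //.
have := deg_lt_no_dominating z nodom; lia.
Qed.

Lemma no_dominating_card_gt2 v : ~ (exists u, dominating e u) -> 2 < #|T|.
Proof.
move=> nodom; have [u vu] := noiso v; have := deg_lt_no_dominating v nodom.
suff: 0 < deg e v by lia.
by apply/card_gt0P; exists u; rewrite in_N.
Qed.

Lemma gamma_tg_le3 u : #|T| - 2 <= deg e u -> gamma_tg e <= 3.
Proof.
move=> du; have := gamma_tg_le_move u; rewrite card_nonneighbours.
have := card_gt1 u; lia.
Qed.

Lemma gamma_tg_gt2 : open_twin_free e -> ~ (exists v, dominating e v) ->
  2 < #|T| -> 2 < gamma_tg e.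
Proof.
move=> tf nodom n3; rewrite ltnNge gamma_tg_le2 //; apply/existsP => -[z fin].
by apply: nodom; exists z; apply/dominating_card/twin_free_all_moves_finish.
Qed.

Lemma gamma_tg_at_le2_nonadjacent x u : #|T| - 2 <= deg e u -> ~~ e u x ->
  gamma_tg_at e x <= 2.
Proof.
move=> du ux; have := gamma_tg_at_le_move (legal_nonadjacent ux).
rewrite card_undominated_add //; have := deg_le u; lia.
Qed.

End TotalDominationGame.

Theorem theorem4p6 (T : finType) (e : rel T)
  (e_sym : symmetric e) (e_irr : irreflexive e)
  (T_nonempty : 0 < #|T|) (noiso : no_isolated e) :
  tg_critical3 e <->
  [/\ open_twin_free e,
      ~ (exists v, dominating e v) &
      forall v, deg e v <= #|T| - 3 ->
        exists u, deg e u = #|T| - 2 /\ ~~ e u v].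
Proof.
split=> [crit | [tf nodom low]].
  split; [exact: critical_twin_free e_sym e_irr noiso crit
         | exact: critical_no_dominating e_sym e_irr noiso crit
         | exact: critical_low_degree e_sym e_irr noiso crit].
have /card_gt0P [v0 _] := T_nonempty.
have n3 := no_dominating_card_gt2 e_irr noiso v0 nodom.
have [u du] : exists u, #|T| - 2 <= deg e u.
  have [/low [u [du _]] | dv0] := leqP (deg e v0) (#|T| - 3); last by exists v0; lia.
  by exists u; rewrite du.
split.
  apply/eqP; rewrite eqn_leq (gamma_tg_le3 e_sym e_irr noiso du).
  exact: gamma_tg_gt2 e_sym e_irr noiso tf nodom n3.
move=> x; rewrite ltnS; have [/low [w [dw wx]] | dx] := leqP (deg e x) (#|T| - 3).
  by apply: (gamma_tg_at_le2_nonadjacent e_sym e_irr noiso _ wx); rewrite dw.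
by apply: (gamma_tg_at_le2_nonadjacent e_sym e_irr noiso (u := x)); rewrite ?e_irr //; lia.
Qed.
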